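(* Let $\vec{G}$ be a finite directed rooted tree in which every edge is directed away from the root. Then $\operatorname{adim}(\vec{G}) = \operatorname{bdim}(\vec{G})$.
   Context: For a finite simple directed graph $\vec{G}$ and $u,v\in V(\vec{G})$, $d(u,v)$ is the length of a shortest directed path from $u$ to $v$, or $\infty$ if none exists; for a nonnegative integer $k$, $d_k(u,v)=\min(d(u,v),k+1)$. A function $f:V(\vec{G})\to\mathbb{Z}_{\geq 0}$ is a resolving broadcast if for any distinct $x,y\in V(\vec{G})$ there is $z$ with $f(z)>0$ and $d_{f(z)}(z,x)\neq d_{f(z)}(z,y)$. The broadcast dimension $\operatorname{bdim}(\vec{G})$ is the minimum of $\sum_{v}f(v)$ over all resolving broadcasts $f$. A set $A\subseteq V(\vec{G})$ is an adjacency resolving set if for any distinct $x,y$ there is $z\in A$ with $d_1(z,x)\neq d_1(z,y)$; the adjacency dimension $\operatorname{adim}(\vec{G})$ is the minimum cardinality of such a set (equivalently, the minimum of $\sum_v f(v)$ over resolving broadcasts with values in $\{0,1\}$). *)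

From mathcomp Require Import all_boot.
Set Implicit Arguments. Unset Strict Implicit. Unset Printing Implicit Defensive.

Section Digraph.
Variables (T : finType) (e : rel T).

(* simple digraph: no loops (multi-edges impossible with a relation) *)
Definition simple_digraph : Prop := irreflexive e.

Definition walkn (n : nat) (u v : T) : bool :=
  [exists p : n.-tuple T, path e u p && (last u p == v)].

(* d_k(u,v) = min(d(u,v), k+1), where d(u,v) is the length of a shortest
   directed walk (= shortest directed path) from u to v, or infinity. *)
Definition dk (k : nat) (u v : T) : nat :=
  head k.+1 [seq n <- iota 0 k.+1 | walkn n u v].

(* directed rooted tree with every edge directed away from the root
   (out-arborescence): there is a root r such that every vertex v is reached
   by exactly one directed walk from r. *)
Definition out_tree_rooted_at (r : T) : Prop :=
  forall v : T, exists! p : seq T, path e r p && (last r p == v).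

Definition out_tree : Prop := exists r : T, out_tree_rooted_at r.

Definition resolving_broadcast (f : T -> nat) : Prop :=
  forall x y : T, x != y ->
    exists z : T, 0 < f z /\ dk (f z) z x != dk (f z) z y.

Definition adjacency_resolving (A : {set T}) : Prop :=
  forall x y : T, x != y ->
    exists2 z : T, z \in A & dk 1 z x != dk 1 z y.

Definition is_bdim (n : nat) : Prop :=
  (exists f : T -> nat, resolving_broadcast f /\ \sum_(v : T) f v = n) /\
  (forall f : T -> nat, resolving_broadcast f -> n <= \sum_(v : T) f v).

Definition is_adim (n : nat) : Prop :=
  (exists A : {set T}, adjacency_resolving A /\ #|A| = n) /\
  (forall A : {set T}, adjacency_resolving A -> n <= #|A|).

End Digraph.

From mathcomp Require Import all_boot.
From mathcomp Require Import zify.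
Set Implicit Arguments. Unset Strict Implicit. Unset Printing Implicit Defensive.

(* An adjacency resolving set is a resolving broadcast with values in {0,1},
   so bdim <= adim.  Conversely, let f be a resolving broadcast and call x
   nearest to w at distance m when a broadcast of w reaches x in m steps and
   no broadcast reaches x in fewer.  In an out-tree two vertices nearest to
   the same w at the same distance coincide: a broadcaster z that sees one of
   them within range is an ancestor of w, hence sees the other at the same
   distance.  So the vertices nearest to some w at a distance m <> 1, i.e.
   m in {0, 2, ..., f w}, are at most sum_w f w many, and they form an
   adjacency resolving set: a vertex outside it is either the unique
   unreached vertex or a child of some broadcaster w in the set, and since a
   vertex has a single parent, w separates that child from every other vertex
   outside the set. *)

Lemma card_bigcup_le (I : Type) (T : finType) (r : seq I) (P : pred I)
    (F : I -> {set T}) :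
  #|\bigcup_(i <- r | P i) F i| <= \sum_(i <- r | P i) #|F i|.
Proof.
elim/big_ind2: _ => [|m A n B lAm lBn|//]; first by rewrite cards0.
by rewrite (leq_trans (leq_card_setU A B)) ?leq_add.
Qed.

Section Walks.
Variables (T : finType) (e : rel T).

Lemma walknP n u v :
  reflect (exists p, [/\ size p = n, path e u p & last u p = v]) (walkn e n u v).
Proof.
apply: (iffP existsP) => [[p /andP[pp /eqP lp]] | [p [sz pp lp]]].
  by exists (val p); split => //; exact: size_tuple.
have sz_n : size p == n by apply/eqP.
by exists (Tuple sz_n); rewrite /= pp lp eqxx.
Qed.

Lemma walkn0 u v : walkn e 0 u v = (u == v).
Proof. by apply/walknP/eqP => [[p [/size0nil -> _ <-]] | <-] //; exists [::]. Qed.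

Lemma walkn1 u v : walkn e 1 u v = e u v.
Proof.
apply/walknP/idP => [[[|a [|b p]] [//= _]] | uv]; first by rewrite andbT => ? <-.
by exists [:: v]; rewrite /= uv.
Qed.

Lemma walkn_cat m n u v w : walkn e m u v -> walkn e n v w -> walkn e (m + n) u w.
Proof.
move=> /walknP[p [sp pp lp]] /walknP[q [sq pq lq]]; apply/walknP.
by exists (p ++ q); rewrite size_cat cat_path last_cat lp pp pq sp sq.
Qed.

Lemma dk_leqS k u v : dk e k u v <= k.+1.
Proof.
rewrite /dk; case E: [seq n <- iota 0 k.+1 | walkn e n u v] => [|a s] //=.
have : a \in [seq n <- iota 0 k.+1 | walkn e n u v] by rewrite E mem_head.
by rewrite mem_filter mem_iota add0n => /and3P[_ _ /ltnW].
Qed.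

Lemma dk_walkn k u v : dk e k u v <= k -> walkn e (dk e k u v) u v.
Proof.
rewrite /dk; case E: [seq n <- iota 0 k.+1 | walkn e n u v] => [|a s] /=.
  by rewrite ltnn.
have : a \in [seq n <- iota 0 k.+1 | walkn e n u v] by rewrite E mem_head.
by rewrite mem_filter => /andP[].
Qed.

Lemma dk1 u v : dk e 1 u v = if u == v then 0 else if e u v then 1 else 2.
Proof. by rewrite /dk /= walkn0 walkn1; case: (u == v); case: (e u v). Qed.

Lemma dk1_self_neq x y : x != y -> dk e 1 x x != dk e 1 x y.
Proof. by move=> xy; rewrite !dk1 eqxx (negbTE xy); case: (e x y). Qed.

Definition adjacency_resolvingb (A : {set T}) :=
  [forall x, forall y, (x != y) ==> [exists z in A, dk e 1 z x != dk e 1 z y]].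

Lemma adjacency_resolvingP A :
  reflect (adjacency_resolving e A) (adjacency_resolvingb A).
Proof.
apply: (iffP forallP) => [resA x y xy | resA x].
  by have /forallP/(_ y)/implyP/(_ xy)/exists_inP[z] := resA x; exists z.
by apply/forallP => y; apply/implyP => /resA[z zA sep]; apply/exists_inP; exists z.
Qed.

Lemma adjacency_resolving_setT : adjacency_resolving e [set: T].
Proof. by move=> x y xy; exists x; rewrite ?inE ?dk1_self_neq. Qed.

Lemma adjacency_resolving_broadcast (A : {set T}) :
  adjacency_resolving e A -> resolving_broadcast e (fun v => nat_of_bool (v \in A)).
Proof. by move=> resA x y /resA[z zA sep]; exists z; rewrite zA. Qed.

(* Otherwise the broadcaster z resolving x and y sees neither of them, and
   both are at the capped distance f z + 1 from z. *)
Lemma resolving_broadcast_eq (f : T -> nat) x y : resolving_broadcast e f ->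
  (forall z, 0 < f z -> dk e (f z) z x <= f z -> dk e (f z) z y = dk e (f z) z x) ->
  (forall z, 0 < f z -> dk e (f z) z y <= f z -> dk e (f z) z x = dk e (f z) z y) ->
  x = y.
Proof.
move=> resf seen_x seen_y; case: (eqVneq x y) => // /resf[z [fz_gt0 /eqP[]]].
case: (leqP (dk e (f z) z x) (f z)) => [x_seen | x_far]; first by rewrite seen_x.
case: (leqP (dk e (f z) z y) (f z)) => [y_seen | y_far]; first by rewrite seen_y.
by apply/eqP; rewrite eqn_leq (leq_trans (dk_leqS _ _ _) y_far)
  (leq_trans (dk_leqS _ _ _) x_far).
Qed.

End Walks.

Section OutTree.
Variables (T : finType) (e : rel T) (r : T).
Hypothesis tree_r : out_tree_rooted_at e r.

Lemma root_path_exists v : exists p, path e r p /\ last r p = v.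
Proof. by have [p [/andP[pp /eqP lp] _]] := tree_r v; exists p. Qed.

Lemma root_path_uniq p q : path e r p -> path e r q -> last r p = last r q -> p = q.
Proof.
move=> pp pq lpq; have [p0 [_ p0_uniq]] := tree_r (last r p).
by rewrite -(p0_uniq p) ?pp ?eqxx // -(p0_uniq q) ?pq ?lpq ?eqxx.
Qed.

Lemma in_edge_uniq a b v : e a v -> e b v -> a = b.
Proof.
have [pa [ppa <-]] := root_path_exists a; have [pb [ppb <-]] := root_path_exists b.
move=> av bv.
have eq_rcons : rcons pa v = rcons pb v.
  by apply: root_path_uniq; rewrite ?rcons_path ?last_rcons ?ppa ?ppb ?av ?bv.
by rewrite (rcons_injl v eq_rcons).
Qed.

Lemma walkn_size_uniq m n u v : walkn e m u v -> walkn e n u v -> m = n.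
Proof.
move=> /walknP[q1 [<- pq1 lq1]] /walknP[q2 [<- pq2 lq2]].
have [p [pp lp]] := root_path_exists u.
have /eqP : p ++ q1 = p ++ q2.
  by apply: root_path_uniq; rewrite ?cat_path ?last_cat ?pp ?lp ?pq1 ?pq2 ?lq1 ?lq2.
by rewrite eqseq_cat // => /andP[_ /eqP ->].
Qed.

(* Walks into x from w and from w' are suffixes of the root path of x, so the
   shorter one is a suffix of the longer one. *)
Lemma walkn_ancestor m m' w w' x :
  walkn e m w x -> walkn e m' w' x -> m <= m' -> walkn e (m' - m) w' w.
Proof.
move=> /walknP[q [sq pq lq]] /walknP[q' [sq' pq' lq']] le_mm'.
have [p [pp lp]] := root_path_exists w; have [p' [pp' lp']] := root_path_exists w'.
have E : p' ++ q' = p ++ q.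
  by apply: root_path_uniq; rewrite ?cat_path ?last_cat ?pp ?pp' ?lp ?lp' ?pq ?pq' ?lq ?lq'.
have size_pp' : size p' + m' = size p + m by rewrite -sq -sq' -!size_cat E.
have take_p : take (size p') p = p'.
  have le_p : size p' <= size p by lia.
  by rewrite -(takel_cat q le_p) -E take_size_cat.
move: pp lp; rewrite -(cat_take_drop (size p') p) cat_path last_cat take_p lp'.
move=> /andP[_ pd] ld; apply/walknP; exists (drop (size p') p).
by split=> //; rewrite size_drop; lia.
Qed.

Lemma dk_walkn_eq k m u v : walkn e m u v -> m <= k -> dk e k u v = m.
Proof.
move=> uv_m le_mk; have : m \in [seq n <- iota 0 k.+1 | walkn e n u v].
  by rewrite mem_filter uv_m mem_iota add0n ltnS.
rewrite /dk; case E: [seq n <- iota 0 k.+1 | walkn e n u v] => [|a s] //= _.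
have : a \in [seq n <- iota 0 k.+1 | walkn e n u v] by rewrite E mem_head.
by rewrite mem_filter => /andP[uv_a _]; exact: walkn_size_uniq uv_a uv_m.
Qed.

End OutTree.

Section NearestBroadcaster.
Variables (T : finType) (e : rel T) (r : T) (f : T -> nat).
Hypothesis tree_r : out_tree_rooted_at e r.
Hypothesis resf : resolving_broadcast e f.

Definition reaches w x m := [&& 0 < f w, m <= f w & walkn e m w x].

Definition nearest w x m :=
  reaches w x m && [forall w', forall m' : 'I_m, ~~ reaches w' x m'].

Lemma nearestP w x m :
  reflect (reaches w x m /\ forall w' m', reaches w' x m' -> m <= m') (nearest w x m).
Proof.
apply: (iffP andP) => [[wxm /forallP far] | [wxm min_m]]; split=> //.
  move=> w' m' w'xm'; rewrite leqNgt; apply/negP => lt_m'm.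
  by move/forallP/(_ (Ordinal lt_m'm)): (far w'); rewrite w'xm'.
by apply/forallP => w'; apply/forallP => m'; apply/negP => /min_m; rewrite leqNgt ltn_ord.
Qed.

(* [bump 1] enumerates the distances 0, 2, ..., f w: a vertex nearest to w at
   distance 1 is left out, w itself tells it apart. *)
Definition nearest_set :=
  \bigcup_(w : T) \bigcup_(i < f w) [set x | nearest w x (bump 1 i)].

Lemma nearest_mem w x m : nearest w x m -> m != 1 -> x \in nearest_set.
Proof.
move=> wxm m_neq1; have /nearestP[/and3P[fw_gt0 le_m_fw _] _] := wxm.
apply/bigcupP; exists w => //.
have lt_i : m.-1 < f w by case: m {wxm m_neq1} le_m_fw.
apply/bigcupP; exists (Ordinal lt_i); rewrite // inE /=.
suff -> : bump 1 m.-1 = m by [].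
by case: m {wxm le_m_fw lt_i} m_neq1 => [|[|m]].
Qed.

Lemma self_mem w : 0 < f w -> w \in nearest_set.
Proof.
move=> fw_gt0; apply: (@nearest_mem w w 0) => //.
by apply/nearestP; rewrite /reaches fw_gt0 walkn0 eqxx.
Qed.

(* By minimality of m, z is no closer to x than w is; so z is an ancestor of w
   and sees y at the same distance as x. *)
Lemma nearest_dk w m x y z : nearest w x m -> nearest w y m -> 0 < f z ->
  dk e (f z) z x <= f z -> dk e (f z) z y = dk e (f z) z x.
Proof.
move=> /nearestP[/and3P[_ _ wx] min_m] /nearestP[/and3P[_ _ wy] _] fz_gt0 zx_seen.
have zx := dk_walkn zx_seen; set d := dk e (f z) z x in zx_seen zx *.
have le_md : m <= d by apply: (min_m z); rewrite /reaches fz_gt0 zx_seen zx.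
have zw := walkn_ancestor tree_r wx zx le_md.
have zy : walkn e d z y by rewrite -(subnK le_md); exact: walkn_cat zw wy.
exact: (dk_walkn_eq tree_r zy zx_seen).
Qed.

Lemma nearest_uniq w m x y : nearest w x m -> nearest w y m -> x = y.
Proof.
move=> wxm wym; apply: (resolving_broadcast_eq resf) => z.
  exact: nearest_dk wxm wym.
exact: nearest_dk wym wxm.
Qed.

Lemma unreached_uniq x y :
  (forall w m, ~~ reaches w x m) -> (forall w m, ~~ reaches w y m) -> x = y.
Proof.
have seen_reaches z v : 0 < f z -> dk e (f z) z v <= f z -> reaches z v (dk e (f z) z v).
  by move=> fz_gt0 zv_seen; rewrite /reaches fz_gt0 zv_seen dk_walkn.
move=> x_far y_far; apply: (resolving_broadcast_eq resf) => z fz_gt0.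
  by move=> /(seen_reaches z x fz_gt0); rewrite (negbTE (x_far _ _)).
by move=> /(seen_reaches z y fz_gt0); rewrite (negbTE (y_far _ _)).
Qed.

Lemma nearest_child w y :
  0 < f w -> e w y -> y \notin nearest_set -> nearest w y 1.
Proof.
move=> fw_gt0 wy y_out; apply/nearestP; split; first by rewrite /reaches fw_gt0 walkn1.
move=> w' [|//] /and3P[fw'_gt0 _]; rewrite walkn0 => /eqP w'y.
by rewrite -w'y (self_mem fw'_gt0) in y_out.
Qed.

Lemma nearest_set_compl x : x \notin nearest_set ->
  (forall w m, ~~ reaches w x m) \/ exists w, nearest w x 1.
Proof.
move=> x_out; have [reached | ] := boolP [exists w, exists m : 'I_(f w).+1, reaches w x m].
  right; have : exists m, [exists w, reaches w x m].
    by case/existsP: reached => w /existsP[m wxm]; exists m; apply/existsP; exists w.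
  case/ex_minnP => m /existsP[w wxm] min_m; exists w.
  have wx_nearest : nearest w x m.
    by apply/nearestP; split=> // w' m' w'xm'; apply: min_m; apply/existsP; exists w'.
  case: (eqVneq m 1) => [<- // | m_neq1].
  by rewrite (nearest_mem wx_nearest m_neq1) in x_out.
move/existsPn => unreached; left => w m; apply/negP => wxm.
have /and3P[_ le_m_fw _] := wxm.
by move/existsPn/(_ (Ordinal (le_m_fw : m < (f w).+1))): (unreached w); rewrite wxm.
Qed.

Lemma nearest_set_resolving : adjacency_resolving e nearest_set.
Proof.
have sep_child x y w : x != y -> x \notin nearest_set -> y \notin nearest_set ->
    nearest w x 1 -> exists2 z, z \in nearest_set & dk e 1 z x != dk e 1 z y.
  move=> xy x_out y_out wx1; have /nearestP[/and3P[fw_gt0 _]] := wx1.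
  rewrite walkn1 => wx _; have w_in := self_mem fw_gt0; exists w => //.
  have [wx_neq wy_neq] : w != x /\ w != y.
    by split; apply/eqP => eq_w; [move: x_out | move: y_out]; rewrite -eq_w w_in.
  rewrite !dk1 (negbTE wx_neq) (negbTE wy_neq) wx; case wy: (e w y) => //.
  by rewrite (nearest_uniq wx1 (nearest_child fw_gt0 wy y_out)) eqxx in xy.
move=> x y xy; case: (boolP (x \in nearest_set)) => [x_in | x_out].
  by exists x => //; rewrite dk1_self_neq.
case: (boolP (y \in nearest_set)) => [y_in | y_out].
  by exists y => //; rewrite eq_sym dk1_self_neq // eq_sym.
case: (nearest_set_compl x_out) => [x_far | [w wx1]]; last exact: sep_child wx1.
case: (nearest_set_compl y_out) => [y_far | [w wy1]].
  by rewrite (unreached_uniq x_far y_far) eqxx in xy.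
have [|z z_in sep] := sep_child y x w _ y_out x_out wy1; first by rewrite eq_sym.
by exists z; rewrite // eq_sym.
Qed.

Lemma card_nearest_set : #|nearest_set| <= \sum_(w : T) f w.
Proof.
apply: leq_trans (card_bigcup_le _ _ _) _; apply: leq_sum => w _.
apply: (@leq_trans (\sum_(i < f w) 1)); last by rewrite sum1_card card_ord.
apply: leq_trans (card_bigcup_le _ _ _) _; apply: leq_sum => i _.
apply/card_le1_eqP => x y; rewrite !inE => wx wy.
exact: nearest_uniq wy wx.
Qed.

End NearestBroadcaster.

Theorem theorem1p14 (T : finType) (e : rel T) :
  simple_digraph e -> out_tree e ->
  exists n : nat, is_adim e n /\ is_bdim e n.
Proof.
move=> _ [r tree_r].
have /adjacency_resolvingP resT := adjacency_resolving_setT e.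
case: (arg_minnP (fun A : {set T} => #|A|) resT) => A /adjacency_resolvingP resA minA.
have adim_min B : adjacency_resolving e B -> #|A| <= #|B|.
  by move/adjacency_resolvingP; exact: minA.
exists #|A|; split; first by split=> //; exists A.
split.
  exists (fun v => nat_of_bool (v \in A)); split; first exact: adjacency_resolving_broadcast.
  by rewrite -sum1_card [RHS]big_mkcond; apply: eq_bigr => v _; case: (v \in A).
move=> f resf; apply: leq_trans (adim_min _ (nearest_set_resolving tree_r resf)) _.
exact: card_nearest_set tree_r resf.
Qed.
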